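(* Let $r>2$, fix $1\le i_-\le r-1$ and put $i_+=i_-+1$. Let $\phi^e_v:H^e_r\to H^e_{r+1}$ be the embedding $T_i\mapsto \check T_i$ ($1\le i<i_-$), $T_{i_-}\mapsto\check T_{i_-}\check T_{i_+}\check T_{i_-}^{-1}$, $T_i\mapsto\check T_{i+1}$ ($i_+\le i\le r$), $T_\rho\mapsto\check T_{i_+}^{-1}\check T_\rho$, and let $\phi^{BL}_v=\varphi_{r+1}\circ\phi^e_v\circ\varphi_r^{-1}:H^{BL}_r\to H^{BL}_{r+1}$. Writing $\check T_i,\check X_j$ for the generators of $H^{BL}_{r+1}$, we have \[ \phi^{BL}_v(T_i)=\begin{cases}\check T_i & 1\le i<i_-,\\ \check T_{i_-}\check T_{i_+}\check T_{i_-}^{-1} & i=i_-,\\ \check T_{i+1} & i_+\le i\le r-1,\end{cases} \] \[ \phi^{BL}_v(X_j)=\begin{cases}\check X_j+(v-v^{-1})\,\check X_{i_+}\,\check T_j^{-1}\cdots\check T_{i_--1}^{-1}\check T_{i_-}^{-1}\check T_{i_--1}^{-1}\cdots\check T_j^{-1} & 1\le j\le i_-,\\ \check X_{j+1} & i_+\le j\le r,\end{cases} \] where for $j=i_-$ the product $\check T_j^{-1}\cdots\check T_{i_-}^{-1}\cdots\check T_j^{-1}$ means $\check T_{i_-}^{-1}$.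
   Context: $\mathcal A=\mathbb Z[v,v^{-1}]$. For $r>2$, $H^e_r$ is the $\mathcal A$-algebra with generators $T_i$ ($i\in\mathbb Z/r\mathbb Z$), $T_\rho^{\pm1}$ and relations $(T_i-v)(T_i+v^{-1})=0$, $T_iT_{i+1}T_i=T_{i+1}T_iT_{i+1}$, $T_iT_j=T_jT_i$ for $i-j\not\equiv\pm1\pmod r$, $T_\rho T_i=T_{i+1}T_\rho$, $T_\rho T_\rho^{-1}=T_\rho^{-1}T_\rho=1$. $H^{BL}_r$ (Bernstein–Lusztig presentation) is the $\mathcal A$-algebra with generators $T_i$ ($1\le i\le r-1$) and $X_j^{\pm1}$ ($1\le j\le r$) and relations: $(T_i-v)(T_i+v^{-1})=0$; $T_iT_{i+1}T_i=T_{i+1}T_iT_{i+1}$ ($1\le i\le r-2$); $T_iT_j=T_jT_i$ ($|i-j|\ge2$); $X_jX_j^{-1}=X_j^{-1}X_j=1$ and $X_jX_k=X_kX_j$ for all $j,k$; $T_iX_iT_i=X_{i+1}$ ($1\le i\le r-1$); $T_iX_j=X_jT_i$ for $j\ne i,i+1$. It is known that the assignment $T_i\mapsto T_i$ ($1\le i\le r-1$), $T_\rho\mapsto(T_{r-1}T_{r-2}\cdots T_1X_1)^{-1}$ extends to an $\mathcal A$-algebra isomorphism $\varphi_r:H^e_r\to H^{BL}_r$ (and similarly $\varphi_{r+1}$). *)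

(* Presented algebras are handled through their universal
   property: an identity holds in H^BL_{n} iff it holds for every family of
   elements satisfying the defining relations in every A-algebra
   (A = Z[v,v^-1], i.e. a ring with a central unit v). *)
From mathcomp Require Import all_boot all_algebra.
Set Implicit Arguments. Unset Strict Implicit. Unset Printing Implicit Defensive.
Import GRing.Theory.
Local Open Scope ring_scope.

(* v is a central unit of R: this is exactly an A-algebra structure on R,
   A = Z[v,v^-1]. *)
Definition central_unit (R : unitRingType) (v : R) : Prop :=
  v \is a GRing.unit /\ forall x : R, v * x = x * v.

Definition BL_rel (R : unitRingType) (v : R) (n : nat)
  (T X : nat -> R) : Prop :=
  (forall i, (1 <= i <= n.-1)%N -> (T i - v) * (T i + v^-1) = 0) /\
  (forall i, (1 <= i)%N -> (i <= n - 2)%N ->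
        T i * T i.+1 * T i = T i.+1 * T i * T i.+1) /\
  (forall i j, (1 <= i <= n.-1)%N -> (1 <= j <= n.-1)%N ->
        (i.+2 <= j)%N || (j.+2 <= i)%N -> T i * T j = T j * T i) /\
  (forall j, (1 <= j <= n)%N -> X j \is a GRing.unit) /\
  (forall j k, (1 <= j <= n)%N -> (1 <= k <= n)%N -> X j * X k = X k * X j) /\
  (forall i, (1 <= i <= n.-1)%N -> T i * X i * T i = X i.+1) /\
  (forall i j, (1 <= i <= n.-1)%N -> (1 <= j <= n)%N -> j != i -> j != i.+1 ->
        T i * X j = X j * T i).

(* Given the images t_i (1 <= i <= r-1) and trho of the generators T_i, T_rho
   of H^e_r under an algebra map H^e_r -> R, the image of
   phi_r^{-1}(X_j) in H^BL_r.  From phi_r(T_rho) = (T_{r-1}...T_1 X_1)^{-1}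
   one gets phi_r^{-1}(X_1) = T_1^{-1}...T_{r-1}^{-1} T_rho^{-1}, and
   X_{j+1} = T_j X_j T_j. *)
Fixpoint XofHe (R : unitRingType) (r : nat) (t : nat -> R) (trho : R) (j : nat) : R :=
  match j with
  | 0 => 0
  | 1 => (\prod_(1 <= k < r) (t k)^-1) * trho^-1
  | (j'.+1) as jj => t j' * XofHe r t trho j' * t j'
  end.

(* Image under phi_{r+1} o phi^e_v of T_i (1 <= i <= r-1), in terms of the
   generators Tc, Xc of H^BL_{r+1}  (phi_{r+1} fixes T_1..T_r). *)
Definition phiT (R : unitRingType) (im : nat) (Tc : nat -> R) (i : nat) : R :=
  if (i < im)%N then Tc i
  else if i == im then Tc im * Tc im.+1 * (Tc im)^-1
  else Tc i.+1.

(* Image under phi_{r+1} o phi^e_v of T_rho: phi^e(T_rho) = Tc_{i+}^{-1} Tc_rho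
   and phi_{r+1}(Tc_rho) = (Tc_r ... Tc_1 Xc_1)^{-1}. *)
Definition phiRho (R : unitRingType) (r im : nat) (Tc Xc : nat -> R) : R :=
  (Tc im.+1)^-1 * ((\prod_(1 <= k < r.+1) Tc (r.+1 - k)%N) * Xc 1%N)^-1.

Definition phiBL_X (R : unitRingType) (r im : nat) (Tc Xc : nat -> R) (j : nat) : R :=
  XofHe r (phiT im Tc) (phiRho r im Tc Xc) j.

Definition Wword (R : unitRingType) (im : nat) (Tc : nat -> R) (j : nat) : R :=
  (\prod_(j <= k < im) (Tc k)^-1) * (Tc im)^-1 *
  (\prod_(j <= k < im) (Tc (im + j - 1 - k)%N)^-1).

(* Both phi(X_j) = phiBL_X j and the claimed right-hand sides obey the
   recursion x_(j+1) = phi(T_j) x_j phi(T_j) for 1 <= j < r (at j = i_- this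
   uses Xc_(i_-) + (v - v^-1) Xc_(i_+) Tc_(i_-)^-1 = Tc_(i_-)^2 Xc_(i_-), a
   form of the quadratic relation). As the phi(T_j) are invertible, it is
   enough to compare the two at j = r. Unwinding the recursion from X_1 gives
   phi(X_r) = phi(T_rho)^-1 phi(T_1) ... phi(T_(r-1))
            = Tc_r ... Tc_1 Xc_1 Tc_(i_+) phi(T_1) ... phi(T_(r-1)),
   and one braid relation turns Tc_(i_+) phi(T_1) ... phi(T_(r-1)) into
   Tc_1 ... Tc_r, so that phi(X_r) = Tc_r ... Tc_1 Xc_1 Tc_1 ... Tc_r = Xc_(r+1). *)

From mathcomp Require Import all_boot all_algebra.
From mathcomp Require Import zify.
Import GRing.Theory.
Local Open Scope ring_scope.

Section ConjugationChains.
Context {R : unitRingType}.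
Implicit Types (a x y : nat -> R) (n : nat).

Lemma prod_desc_recl a n : (1 <= n)%N ->
  \prod_(1 <= i < n.+1) a (n.+1 - i)%N = a n * \prod_(1 <= i < n) a (n - i)%N.
Proof.
move=> n_gt0; rewrite big_ltn // big_add1 /= subn1 /=.
by congr (_ * _); apply: eq_bigr => i _; rewrite subSS.
Qed.

Lemma prod_desc_ltn a j m : (j < m)%N ->
  \prod_(j <= k < m) a (m + j - 1 - k)%N =
  (\prod_(j.+1 <= k < m) a (m + j.+1 - 1 - k)%N) * a j.
Proof.
case: m => [//|m] jm.
rewrite big_nat_recr //= big_add1 /=.
have -> : (m.+1 + j - 1 - m)%N = j by lia.
by congr (_ * _); apply: eq_bigr => k _; congr a; lia.
Qed.

Lemma prod_desc_mul_prodV {a n} :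
  (forall i, (1 <= i < n)%N -> a i \is a GRing.unit) ->
  (\prod_(1 <= i < n) a (n - i)%N) * \prod_(1 <= i < n) (a i)^-1 = 1.
Proof.
elim: n => [|n IH] Ua; first by rewrite !big_geq // mulr1.
case: n IH Ua => [|n] IH Ua; first by rewrite !big_geq // mulr1.
have Un : a n.+1 \is a GRing.unit by apply: Ua; lia.
rewrite prod_desc_recl // [\prod_(1 <= i < n.+2) _^-1]big_nat_recr //=.
rewrite mulrA -(mulrA (a _)) IH ?mulr1 ?mulrV // => i /andP[i1 ilt].
by apply: Ua; lia.
Qed.

Definition conj_chain a x n :=
  forall j, (1 <= j < n)%N -> x j.+1 = a j * x j * a j.

Lemma conj_chainE {a x n} : (1 <= n)%N -> conj_chain a x n ->
  x n = (\prod_(1 <= i < n) a (n - i)%N) * x 1%N * \prod_(1 <= i < n) a i.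
Proof.
elim: n => [//|n IH] _ chain.
case: n IH chain => [|n] IH chain; first by rewrite !big_geq ?mul1r ?mulr1.
have chain' : conj_chain a x n.+1 by move=> j /andP[j1 jn]; apply: chain; lia.
rewrite chain ?IH //; last by lia.
by rewrite (prod_desc_recl a n.+1) // [\prod_(1 <= i < n.+2) a i]big_nat_recr //= !mulrA.
Qed.

Lemma conj_chain_eq {a x y n} :
  (forall j, (1 <= j < n)%N -> a j \is a GRing.unit) ->
  conj_chain a x n -> conj_chain a y n -> x n = y n ->
  forall j, (1 <= j <= n)%N -> x j = y j.
Proof.
move=> Ua cx cy xy_n.
suff desc d : (d < n)%N -> x (n - d)%N = y (n - d)%N.
  by move=> j /andP[j1 jn]; rewrite -(subKn jn) desc //; lia.
elim: d => [|d IH] dn; first by rewrite subn0.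
have e : (n - d = (n - d.+1).+1)%N by lia.
have Uk : a (n - d.+1)%N \is a GRing.unit by apply: Ua; lia.
have := IH (ltnW dn); rewrite e cx ?cy; try lia.
by move/(mulIr Uk)/(mulrI Uk).
Qed.

End ConjugationChains.

Section HeckeParameter.
Context {R : unitRingType} {v : R}.
Hypothesis v_central : central_unit v.

Lemma comm_hecke_param x : GRing.comm (v - v^-1) x.
Proof.
case: v_central => _ Cv; apply/commr_sym/commrB; first exact/commr_sym.
exact/commrV/commr_sym.
Qed.

Lemma hecke_quadraticE T : (T - v) * (T + v^-1) = 0 ->
  T * T = 1 + (v - v^-1) * T.
Proof.
case: v_central => Uv Cv E; apply/eqP; rewrite -subr_eq0 -E.
have CvT : T * v^-1 = v^-1 * T by apply/commrV/commr_sym.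
rewrite mulrBl !mulrDr !mulrBl (mulrV Uv) CvT (Cv T).
rewrite opprD opprB -!addrA; apply/eqP; congr (_ + _).
by rewrite addrCA [RHS]addrCA (addrC (-1)).
Qed.

End HeckeParameter.

Lemma quadratic_unit (R : unitRingType) (c T : R) :
  (forall x, GRing.comm c x) -> T * T = 1 + c * T -> T \is a GRing.unit.
Proof.
move=> Cc E; apply/unitrP; exists (T - c); split.
  by rewrite mulrBl E addrK.
by rewrite mulrBr E -(Cc T) addrK.
Qed.

Section BernsteinLusztigRelations.
Context {R : unitRingType} {v : R} {n : nat} {T X : nat -> R}.
Hypotheses (v_central : central_unit v) (BL : BL_rel v n T X).

Lemma BL_quadratic i : (1 <= i <= n.-1)%N -> T i * T i = 1 + (v - v^-1) * T i.
Proof. by case: BL => quad _ i_range; apply/hecke_quadraticE/quad. Qed.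

Lemma BL_unitT i : (1 <= i <= n.-1)%N -> T i \is a GRing.unit.
Proof.
move/BL_quadratic; apply: quadratic_unit; exact: comm_hecke_param.
Qed.

Lemma BL_braid i : (1 <= i)%N -> (i <= n - 2)%N ->
  T i * T i.+1 * T i = T i.+1 * T i * T i.+1.
Proof. by case: BL => _ [braid _]; apply: braid. Qed.

Lemma BL_commT i j : (1 <= i <= n.-1)%N -> (1 <= j <= n.-1)%N ->
  (i.+2 <= j)%N -> T i * T j = T j * T i.
Proof. by case: BL => _ [_ [comm _]] i_range j_range ij; rewrite comm // ij. Qed.

Lemma BL_unitX j : (1 <= j <= n)%N -> X j \is a GRing.unit.
Proof. by case: BL => _ [_ [_ [unitX _]]]; apply: unitX. Qed.

Lemma BL_conjX i : (1 <= i <= n.-1)%N -> T i * X i * T i = X i.+1.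
Proof. by case: BL => _ [_ [_ [_ [_ [conj _]]]]]; apply: conj. Qed.

Lemma BL_commTX i j : (1 <= i <= n.-1)%N -> (1 <= j <= n)%N ->
  j != i -> j != i.+1 -> T i * X j = X j * T i.
Proof. by case: BL => _ [_ [_ [_ [_ [_ comm]]]]]; apply: comm. Qed.

Lemma BL_conj_chain : conj_chain T X n.
Proof. by move=> j j_range; rewrite BL_conjX //; lia. Qed.

End BernsteinLusztigRelations.

Section VerticalEmbedding.
Context {R : unitRingType} {v : R} {r im : nat} {Tc Xc : nat -> R}.
Hypotheses (v_central : central_unit v) (BL : BL_rel v r.+1 Tc Xc).
Hypotheses (im_gt0 : (0 < im)%N) (im_lt_r : (im < r)%N).

Local Notation t := (phiT im Tc).
Local Notation X := (phiBL_X r im Tc Xc).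

Lemma phiT_lt i : (i < im)%N -> t i = Tc i.
Proof. by rewrite /phiT => ->. Qed.

Lemma phiT_im : t im = Tc im * Tc im.+1 * (Tc im)^-1.
Proof. by rewrite /phiT ltnn eqxx. Qed.

Lemma phiT_gt i : (im < i)%N -> t i = Tc i.+1.
Proof. by move=> im_lt_i; rewrite /phiT ltnNge ltnW // gtn_eqF. Qed.

Let unitTc i : (1 <= i <= r)%N -> Tc i \is a GRing.unit.
Proof. exact: BL_unitT v_central BL i. Qed.

Lemma phiT_unit i : (1 <= i < r)%N -> t i \is a GRing.unit.
Proof.
move=> /andP[i_gt0 i_lt_r]; case: (ltngtP i im) => [i_lt|i_gt|->].
- by rewrite phiT_lt // unitTc //; lia.
- by rewrite phiT_gt // unitTc //; lia.
by rewrite phiT_im !unitrMr ?unitrV ?unitTc //; lia.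
Qed.

Lemma phiBL_X_conj_chain : conj_chain t X r.
Proof. by case=> [//|j]. Qed.

Lemma Tc_succ_mul_prod_phiT :
  Tc im.+1 * \prod_(1 <= i < r) t i = \prod_(1 <= i < r.+1) Tc i.
Proof.
have low : \prod_(1 <= i < im) t i = \prod_(1 <= i < im) Tc i.
  by apply: eq_big_nat => i /andP[_ i_lt]; rewrite phiT_lt.
have high : \prod_(im.+1 <= i < r) t i = \prod_(im.+2 <= i < r.+1) Tc i.
  by rewrite [RHS]big_add1; apply: eq_big_nat => i /andP[i_gt _]; rewrite phiT_gt.
have comm_low : GRing.comm (Tc im.+1) (\prod_(1 <= i < im) Tc i).
  rewrite big_seq; apply: commr_prod => i; rewrite mem_index_iota => i_range.
  by apply/esym/(BL_commT BL); lia.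
have braid : Tc im * Tc im.+1 * Tc im = Tc im.+1 * Tc im * Tc im.+1.
  by apply: (BL_braid BL); lia.
rewrite (big_cat_nat im_gt0 (ltnW im_lt_r)) (big_ltn im_lt_r) /= low high.
rewrite (big_cat_nat im_gt0 (leqW (ltnW im_lt_r))) (big_ltn (ltnW im_lt_r : im < r.+1)%N).
rewrite (big_ltn (im_lt_r : im.+1 < r.+1)%N) /= phiT_im mulrA comm_low -!mulrA; congr (_ * _).
by rewrite !mulrA -braid mulrK ?unitTc //; lia.
Qed.

Lemma phiRho_inv : (phiRho r im Tc Xc)^-1 =
  (\prod_(1 <= k < r.+1) Tc (r.+1 - k)%N) * Xc 1%N * Tc im.+1.
Proof.
have unitE : \prod_(1 <= k < r.+1) Tc (r.+1 - k)%N \is a GRing.unit.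
  rewrite big_seq; apply: unitr_prod => k; rewrite mem_index_iota => k_range.
  by apply: unitTc; lia.
have unitX1 : Xc 1%N \is a GRing.unit by apply: (BL_unitX BL).
by rewrite /phiRho invrM ?unitrV ?unitrMl ?unitTc ?invrK //; lia.
Qed.

Lemma phiBL_X_top : X r = Xc r.+1.
Proof.
have r_gt0 : (0 < r)%N by lia.
have X1 : X 1%N = (\prod_(1 <= k < r) (t k)^-1) * (phiRho r im Tc Xc)^-1 by [].
rewrite (conj_chainE r_gt0 phiBL_X_conj_chain) X1 mulrA.
rewrite (prod_desc_mul_prodV phiT_unit) mul1r phiRho_inv -mulrA Tc_succ_mul_prod_phiT.
by rewrite (conj_chainE _ (BL_conj_chain BL)).
Qed.

Lemma Wword_conj j : (1 <= j)%N -> (j < im)%N ->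
  Tc j * Wword im Tc j * Tc j = Wword im Tc j.+1.
Proof.
move=> j_gt0 j_lt_im; have Uj : Tc j \is a GRing.unit by apply: unitTc; lia.
rewrite /Wword (big_ltn j_lt_im) (prod_desc_ltn (fun k => (Tc k)^-1) _ _ j_lt_im).
by rewrite !mulrA mulrV // mul1r divrK.
Qed.

Definition phiBL_X_formula j :=
  if (j <= im)%N then Xc j + (v - v^-1) * Xc im.+1 * Wword im Tc j else Xc j.+1.

Lemma phiBL_X_formula_conj_chain : conj_chain t phiBL_X_formula r.
Proof.
move=> j /andP[j_gt0 j_lt_r]; rewrite /phiBL_X_formula.
case: (ltngtP j im) => [j_lt_im|im_lt_j|->].
- rewrite phiT_lt // mulrDr mulrDl (BL_conjX BL); last by lia.
  rewrite -Wword_conj //; congr (_ + _).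
  have TcXc : Tc j * Xc im.+1 = Xc im.+1 * Tc j by apply: (BL_commTX BL); lia.
  rewrite !mulrA -(comm_hecke_param v_central (Tc j)).
  by rewrite -(mulrA (v - v^-1) (Tc j)) TcXc !mulrA.
- by rewrite phiT_gt // (BL_conjX BL) //; lia.
have UA : Tc im \is a GRing.unit by apply: unitTc; lia.
have Wword_im : Wword im Tc im = (Tc im)^-1.
  by rewrite /Wword !big_geq // mulr1 mul1r.
have formula_im : Xc im + (v - v^-1) * Xc im.+1 * (Tc im)^-1 = Tc im * Tc im * Xc im.
  rewrite -(BL_conjX BL) ?(BL_quadratic v_central BL); try lia.
  by rewrite !mulrA mulrK // [RHS]mulrDl mul1r.
have commTX : Tc im * Xc im.+2 = Xc im.+2 * Tc im by apply: (BL_commTX BL); lia.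
rewrite Wword_im formula_im phiT_im -[LHS](mulrK UA) -commTX.
rewrite -(BL_conjX BL im.+1); last by lia.
rewrite -(BL_conjX BL im); last by lia.
by rewrite !mulrA divrK.
Qed.

Lemma phiBL_XE j : (1 <= j <= r)%N -> X j = phiBL_X_formula j.
Proof.
apply: (conj_chain_eq phiT_unit phiBL_X_conj_chain phiBL_X_formula_conj_chain).
by rewrite phiBL_X_top /phiBL_X_formula leqNgt im_lt_r.
Qed.

End VerticalEmbedding.

Theorem mainTheorem9 (R : unitRingType) (v : R) (r im : nat)
  (Tc Xc : nat -> R) :
  (2 < r)%N -> (1 <= im <= r.-1)%N ->
  central_unit v -> BL_rel v r.+1 Tc Xc ->
  (forall i, (1 <= i <= r.-1)%N ->
     phiT im Tc i =
       (if (i < im)%N then Tc i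
        else if i == im then Tc im * Tc im.+1 * (Tc im)^-1
        else Tc i.+1)) /\
  (forall j, (1 <= j <= im)%N ->
     phiBL_X r im Tc Xc j = Xc j + (v - v^-1) * Xc im.+1 * Wword im Tc j) /\
  (forall j, (im.+1 <= j <= r)%N -> phiBL_X r im Tc Xc j = Xc j.+1).
Proof.
move=> _ /andP[im_gt0 im_le] v_central BL.
have im_lt_r : (im < r)%N by lia.
have XE := phiBL_XE v_central BL im_gt0 im_lt_r.
split; first by [].
split=> j /andP[j_lo j_hi]; rewrite XE /phiBL_X_formula; try lia.
- by rewrite j_hi.
- by rewrite leqNgt j_lo.
Qed.
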